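(* Let $K$ be a simplicial complex on $[m]$ and let $K_1,\dots,K_m$ be simplicial complexes on pairwise disjoint finite vertex sets, each having at least one vertex (a 0-simplex). Suppose $K$ has a minimal missing face $\omega$ with $|\omega|\ge3$ and there is a vertex $v\in\omega$ such that $K_v$ contains a 1-simplex. Then for no $k\ge0$ is the substitution complex $K(K_1,\dots,K_m)$ equal to the $k$-skeleton of a flag complex.
   Context: A minimal missing face of $K$ is a subset $\omega$ of the vertex set with $\omega\notin K$ but every proper subset of $\omega$ in $K$. A simplicial complex is flag if every set of its vertices pairwise joined by edges is a simplex. The $k$-skeleton of a complex consists of its simplices of dimension at most $k$. The substitution complex $K(K_1,\dots,K_m)$ is $\bigcup_{\sigma\in K}\ast_{i\in\sigma}K_i$, i.e. its simplices are the sets $\bigcup_{i\in\sigma}\tau_i$ with $\sigma\in K$ and $\tau_i\in K_i$. *)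

From mathcomp Require Import all_boot.
Set Implicit Arguments. Unset Strict Implicit. Unset Printing Implicit Defensive.

Definition is_complex (T : finType) (K : {set {set T}}) : Prop :=
  forall s t : {set T}, s \in K -> t \subset s -> t \in K.

Definition min_missing_face (T : finType) (K : {set {set T}}) (w : {set T}) : Prop :=
  w \notin K /\ forall t : {set T}, t \proper w -> t \in K.

Definition is_flag (T : finType) (K : {set {set T}}) : Prop :=
  forall s : {set T},
    (forall x, x \in s -> [set x] \in K) ->
    (forall x y, x \in s -> y \in s -> x != y -> [set x; y] \in K) ->
    s \in K.

(* k-skeleton: simplices of dimension at most k, i.e. at most k+1 vertices. *)
Definition skeleton (T : finType) (k : nat) (K : {set {set T}}) : {set {set T}} :=
  [set s in K | #|s| <= k.+1].

Definition subst_complex (m : nat) (W : finType) (K : {set {set 'I_m}})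
    (Ks : 'I_m -> {set {set W}}) : {set {set W}} :=
  [set s : {set W} | [exists sigma in K, exists tau : {ffun 'I_m -> {set W}},
      [forall i in sigma, tau i \in Ks i] && (s == \bigcup_(i in sigma) tau i)]].

From mathcomp Require Import all_boot.
Set Implicit Arguments. Unset Strict Implicit. Unset Printing Implicit Defensive.

(* Pick one vertex y i of each K_i, with y v an endpoint a of an edge {a, b}
   of K_v, and let u be a vertex of w other than v.  Every face of K lifts to
   the face y(sigma) of K(K_1,...,K_m), and y(sigma) is a face only when sigma
   is, because the V_i are disjoint.  Hence y(w) is a non-face all of whose
   pairs are faces (|w| >= 3), so it lies in any flag complex L containing
   K(K_1,...,K_m); if K(K_1,...,K_m) were the k-skeleton of L this forces
   |w| > k + 1.  But b together with y(w - u) is a face with |w| vertices,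
   so |w| <= k + 1. *)

Section SubstitutionComplex.

Variables (m : nat) (W : finType) (K : {set {set 'I_m}}).
Variables (V : 'I_m -> {set W}) (Ks : 'I_m -> {set {set W}}).
Hypothesis complex_K : is_complex K.
Hypothesis complex_Ks : forall i, is_complex (Ks i).
Hypothesis Ks_sub : forall i s, s \in Ks i -> s \subset V i.
Hypothesis disjoint_V : forall i j, i != j -> [disjoint V i & V j].

Lemma vertex_set_uniq i j x : x \in V i -> x \in V j -> i = j.
Proof.
move=> xi xj; apply/eqP; apply: contraTT xj => /disjoint_V dij.
by rewrite (disjointFr dij xi).
Qed.

Lemma mem_subst_complex (sigma : {set 'I_m}) (s : {set W}) :
  sigma \in K ->
  (forall x, x \in s -> exists2 i, i \in sigma & x \in V i) ->
  (forall i, i \in sigma -> exists2 t, t \in Ks i & s :&: V i \subset t) ->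
  s \in subst_complex K Ks.
Proof.
move=> sigmaK cover local; rewrite inE; apply/existsP; exists sigma.
rewrite sigmaK /=; apply/existsP; exists [ffun i => s :&: V i].
apply/andP; split.
  apply/forall_inP => i /local[t tK st]; rewrite ffunE.
  exact: complex_Ks tK st.
apply/eqP/setP => x; apply/idP/bigcupP => [xs | [i _]].
  by have [i isigma xi] := cover x xs; exists i; rewrite // ffunE inE xs.
by rewrite ffunE => /setIP[].
Qed.

Variable y : 'I_m -> W.
Hypothesis y_vertex : forall i, [set y i] \in Ks i.

Lemma transversal_mem i : y i \in V i.
Proof. by apply: (subsetP (Ks_sub (y_vertex i))); rewrite inE. Qed.

Lemma transversal_inj : injective y.
Proof.
move=> i j yij; apply: (vertex_set_uniq (x := y i)); first exact: transversal_mem.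
by rewrite yij transversal_mem.
Qed.

Lemma transversal_vertex_eq (sigma : {set 'I_m}) i x :
  x \in y @: sigma -> x \in V i -> x = y i.
Proof. by case/imsetP=> j _ -> yji; rewrite (vertex_set_uniq (transversal_mem j) yji). Qed.

Lemma imset_transversal_subst (sigma : {set 'I_m}) :
  (y @: sigma \in subst_complex K Ks) = (sigma \in K).
Proof.
apply/idP/idP => [|sigmaK].
  rewrite inE => /exists_inP[tau tauK /existsP[t /andP[/forall_inP tKs /eqP ysigma]]].
  apply: complex_K tauK _; apply/subsetP => j jsigma.
  have : y j \in y @: sigma by rewrite imset_f.
  rewrite ysigma => /bigcupP[i itau yjt].
  by rewrite (vertex_set_uniq (transversal_mem j) (subsetP (Ks_sub (tKs i itau)) _ yjt)).
apply: (mem_subst_complex sigmaK) => [x /imsetP[i isigma ->] | i _].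
  by exists i; rewrite // transversal_mem.
exists [set y i] => //; apply/subsetP => x /setIP[xy xi].
by rewrite (transversal_vertex_eq xy xi) set11.
Qed.

Section ExtraVertex.

Variables (v : 'I_m) (b : W).
Hypothesis edge_vb : [set y v; b] \in Ks v.

Lemma extra_vertex_mem : b \in V v.
Proof. by apply: (subsetP (Ks_sub edge_vb)); rewrite !inE eqxx orbT. Qed.

Lemma setU1_transversal_subst (sigma : {set 'I_m}) :
  sigma \in K -> v \in sigma -> b |: y @: sigma \in subst_complex K Ks.
Proof.
move=> sigmaK vsigma; apply: (mem_subst_complex sigmaK) => [x | i _].
  case/setU1P => [-> | /imsetP[i isigma ->]]; first by exists v; rewrite ?extra_vertex_mem.
  by exists i; rewrite // transversal_mem.
have [-> | iv] := eqVneq i v.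
  exists [set y v; b] => //; apply/subsetP => x /setIP[/setU1P[-> | xy] xv].
    by rewrite !inE eqxx orbT.
  by rewrite (transversal_vertex_eq xy xv) !inE eqxx.
exists [set y i] => //; apply/subsetP => x /setIP[/setU1P[-> | xy] xi].
  by rewrite (vertex_set_uniq extra_vertex_mem xi) eqxx in iv.
by rewrite (transversal_vertex_eq xy xi) set11.
Qed.

Lemma card_setU1_transversal (sigma : {set 'I_m}) :
  b != y v -> #|b |: y @: sigma| = #|sigma|.+1.
Proof.
move=> bNy; rewrite cardsU1 card_imset; last exact: transversal_inj.
suff -> : b \notin y @: sigma by [].
apply/imsetP => -[j _ bj]; move: (extra_vertex_mem); rewrite bj => yjv.
by move: bNy; rewrite bj (vertex_set_uniq (transversal_mem j) yjv) eqxx.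
Qed.

End ExtraVertex.

End SubstitutionComplex.

Lemma transversal_exists (m : nat) (W : finType) (Ks : 'I_m -> {set {set W}})
    (v : 'I_m) (a : W) :
  (forall i, exists x, [set x] \in Ks i) -> [set a] \in Ks v ->
  exists2 y : 'I_m -> W, forall i, [set y i] \in Ks i & y v = a.
Proof.
move=> vertex_Ks av; exists (fun i => if i == v then a else xchoose (vertex_Ks i)).
  by move=> i; case: eqP => [-> // | _]; exact: (xchooseP (vertex_Ks i)).
by rewrite eqxx.
Qed.

Lemma flag_mem_of_edges (T : finType) (L : {set {set T}}) (s : {set T}) :
  is_flag L -> (forall x y, x \in s -> y \in s -> [set x; y] \in L) -> s \in L.
Proof.
move=> flagL edges; apply: flagL => [x xs | x y xs ys _]; last exact: edges.
by have := edges x x xs xs; rewrite setUid.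
Qed.

Theorem lemma7p5 (m : nat) (W : finType) (K : {set {set 'I_m}})
    (V : 'I_m -> {set W}) (Ks : 'I_m -> {set {set W}}) :
  is_complex K ->
  (forall i, is_complex (Ks i)) ->
  (forall i s, s \in Ks i -> s \subset V i) ->
  (forall i j, i != j -> [disjoint V i & V j]) ->
  (forall i, exists x : W, [set x] \in Ks i) ->
  forall (w : {set 'I_m}), min_missing_face K w -> 3 <= #|w| ->
  forall v, v \in w -> (exists e, e \in Ks v /\ #|e| = 2) ->
  forall (k : nat) (L : {set {set W}}), is_complex L -> is_flag L ->
    subst_complex K Ks <> skeleton k L.
Proof.
move=> complex_K complex_Ks Ks_sub disjoint_V vertex_Ks w [wNK w_proper] w3 v vw
  [e [eK /eqP/cards2P[a [b [ab e_ab]]]]] k L _ flagL SL.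
have [y y_vertex yv] : exists2 y : 'I_m -> W, forall i, [set y i] \in Ks i & y v = a.
  by apply: transversal_exists => //; apply: complex_Ks eK _; rewrite e_ab sub1set setU11.
have edge_vb : [set y v; b] \in Ks v by rewrite yv -e_ab.
have y_inj := transversal_inj Ks_sub disjoint_V y_vertex.
have yS := imset_transversal_subst complex_K complex_Ks Ks_sub disjoint_V y_vertex.
have S_in_L s : s \in subst_complex K Ks -> s \in L by rewrite SL inE => /andP[].
have yw_L : y @: w \in L.
  apply: flag_mem_of_edges => // _ _ /imsetP[p pw ->] /imsetP[q qw ->].
  rewrite -(imset_set1 y q) -imsetU1; apply/S_in_L.
  rewrite yS; apply: w_proper; rewrite properEcard.
  rewrite subUset !sub1set pw qw (leq_ltn_trans (leq_card_setU _ _)) //.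
  by rewrite !cards1.
have w_big : k.+1 < #|w|.
  rewrite -(card_imset _ y_inj) ltnNge.
  by apply: contraNN wNK => yw_small; rewrite -yS SL inE yw_L.
have [u uw uv] : exists2 u, u \in w & u != v.
  have : 0 < #|w :\ v| by move: w3; rewrite (cardsD1 v w) vw add1n ltnS; exact: ltnW.
  by case/card_gt0P => u /setD1P[uv uw]; exists u.
have C_S : b |: y @: (w :\ u) \in subst_complex K Ks.
  apply: (setU1_transversal_subst complex_Ks Ks_sub disjoint_V y_vertex edge_vb).
    exact: w_proper (properD1 uw).
  by rewrite !inE eq_sym uv vw.
move: C_S; rewrite SL inE => /andP[_]; apply/negP; rewrite -ltnNge.
rewrite (card_setU1_transversal Ks_sub disjoint_V y_vertex edge_vb); last by rewrite yv eq_sym.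
by rewrite (cardsD1 u w) uw in w_big.
Qed.
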